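(* Let $\gamma(n)>0$ and $a(n)\ge\frac12$ be sequences, $\rho_0=\sqrt{1+e^{W_0(2/e^2)+2}}$, and $$\sigma(n)\defeq\frac{a(n)+\gamma(n)}{W_0\!\left(\frac{1}{2\rho_0\gamma(n)}+\frac1{\rho_0}\right)}.$$ Then $\sigma(n)\in O\big(a(n)\log(1/\gamma(n))^{-1}\big)$ if $\gamma(n)\in o(1)$, and $\sigma(n)\in O(a(n)+\gamma(n))$ if $\gamma(n)\in\Omega(1)$.
   Context: $W_0$ is the principal branch of the Lambert W function. In the paper, $\sigma(n)=s(\varepsilon=n^{-a})/\log n$ is the normalised Taylor order, $\gamma(n)=\beta R_{\mathbf Q}R_{\mathbf K}/\log n$ the normalised entry size, and $a(n)$ the error exponent. Asymptotics are as $n\to\infty$. *)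

From Stdlib Require Import Reals Lra ClassicalEpsilon.
Open Scope R_scope.

(* Principal branch W_0 of the Lambert W function: for x >= -1/e, the unique
   w >= -1 with w * exp w = x (chosen by Hilbert's epsilon; its value outside
   the domain x >= -1/e is irrelevant here since it is only applied to
   positive arguments). *)
Definition W0 (x : R) : R :=
  epsilon (inhabits 0) (fun w => -1 <= w /\ w * exp w = x).

Definition rho0 : R := sqrt (1 + exp (W0 (2 / (exp 1) ^ 2) + 2)).

Definition sigmaT (a gamma : nat -> R) (n : nat) : R :=
  (a n + gamma n) / W0 (1 / (2 * rho0 * gamma n) + 1 / rho0).

Definition bigO (u v : nat -> R) : Prop :=
  exists C : R, exists N : nat, forall n, (N <= n)%nat -> Rabs (u n) <= C * Rabs (v n).
Definition littleo (u v : nat -> R) : Prop :=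
  forall eps : R, 0 < eps -> exists N : nat, forall n, (N <= n)%nat ->
    Rabs (u n) <= eps * Rabs (v n).
(* u in Omega(v)  (Knuth's convention: eventually |u| >= c |v| with c > 0) *)
Definition bigOmega (u v : nat -> R) : Prop :=
  exists c : R, 0 < c /\ exists N : nat, forall n, (N <= n)%nat ->
    c * Rabs (v n) <= Rabs (u n).

(* Writing w = W0 x, the identity w * exp w = x gives two lower bounds on w:
   since w <= exp w, x <= exp (2 w), i.e. w >= ln x / 2; and if w <= 1 then
   x <= e w. The argument of W0 in sigma(n) is at least 1/rho0, so the
   second bound keeps W0 away from 0 for every n, which gives the
   O(a + gamma) estimate. Once gamma(n) <= 1/(2 rho0)^2, the argument is at
   least ln(1/gamma(n)) / (2 rho0) and the first bound gives
   W0 >= ln(1/gamma(n)) / 4, while a + gamma <= 3 a since a >= 1/2. *)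
From Stdlib Require Import Reals Lra ClassicalEpsilon.
Open Scope R_scope.

Lemma ln_le x y : 0 < x -> x <= y -> ln x <= ln y.
Proof.
  intros Hx [Hlt | ->]; [left; apply ln_increasing | right]; auto.
Qed.

Lemma W0_spec x : 0 < x -> 0 < W0 x /\ W0 x * exp (W0 x) = x.
Proof.
  intros Hx.
  assert (Hex : exists w, -1 <= w /\ w * exp w = x).
  { assert (Hcont : continuity (fun w => w * exp w - x)).
    { apply continuity_minus.
      - apply continuity_mult; apply derivable_continuous;
          [apply derivable_id | apply derivable_exp].
      - apply continuity_const; intros ? ?; reflexivity. }
    assert (Hexp : 1 < exp x) by (pose proof (exp_ineq1_le x); lra).
    destruct (IVT _ 0 x Hcont Hx) as [w [Hw Hroot]].
    - rewrite Rmult_0_l; lra.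
    - nra.
    - exists w; split; lra. }
  destruct (epsilon_spec (inhabits 0) _ Hex) as [_ Heq].
  change (W0 x * exp (W0 x) = x) in Heq.
  split; [|exact Heq].
  pose proof (exp_pos (W0 x)).
  destruct (Rle_or_lt (W0 x) 0); [nra | assumption].
Qed.

Lemma ln_le_2W0 x : 0 < x -> ln x <= 2 * W0 x.
Proof.
  intros Hx; destruct (W0_spec x Hx) as [Hpos Heq].
  pose proof (exp_ineq1_le (W0 x)).
  assert (Hle : x <= exp (2 * W0 x)).
  { replace (2 * W0 x) with (W0 x + W0 x) by ring.
    rewrite exp_plus; nra. }
  rewrite <- (ln_exp (2 * W0 x)); apply ln_le; assumption.
Qed.

Lemma W0_ge_min c x : 0 < c -> c <= x -> Rmin 1 (c / exp 1) <= W0 x.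
Proof.
  intros Hc Hcx; destruct (W0_spec x ltac:(lra)) as [Hpos Heq].
  destruct (Rle_or_lt (W0 x) 1) as [Hle1 | Hgt1].
  - apply Rle_trans with (c / exp 1); [apply Rmin_r |].
    pose proof (exp_pos 1).
    assert (Hexp : exp (W0 x) <= exp 1).
    { destruct Hle1 as [Hlt | ->]; [left; apply exp_increasing |]; lra. }
    apply Rmult_le_reg_r with (exp 1); [lra |].
    unfold Rdiv; rewrite Rmult_assoc, Rinv_l by lra; nra.
  - apply Rle_trans with 1; [apply Rmin_l | lra].
Qed.

Lemma quarter_ln_le_W0 K y x :
  0 < K -> K * K <= y -> y / K <= x -> ln y / 4 <= W0 x.
Proof.
  intros HK HKy Hyx.
  assert (HyK : 0 < y / K) by (apply Rdiv_lt_0_compat; nra).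
  assert (Hln_div : ln (y / K) = ln y - ln K).
  { unfold Rdiv; rewrite ln_mult, ln_Rinv by (try apply Rinv_0_lt_compat; nra).
    ring. }
  assert (Hln_K : 2 * ln K <= ln y).
  { replace (2 * ln K) with (ln (K * K)) by (rewrite ln_mult; lra).
    apply ln_le; nra. }
  pose proof (ln_le (y / K) x HyK Hyx).
  pose proof (ln_le_2W0 x ltac:(lra)).
  lra.
Qed.

Lemma rho0_gt1 : 1 < rho0.
Proof.
  unfold rho0; rewrite <- sqrt_1 at 1.
  pose proof (exp_pos (W0 (2 / exp 1 ^ 2) + 2)).
  apply sqrt_lt_1; lra.
Qed.

Lemma sigmaT_le_ln a gamma n :
  0 < gamma n -> gamma n <= / (2 * rho0 * (2 * rho0)) -> 1 / 2 <= a n ->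
  Rabs (sigmaT a gamma n) <= 12 * Rabs (a n * / ln (1 / gamma n)).
Proof.
  intros Hg Hsmall Ha; pose proof rho0_gt1.
  set (K := 2 * rho0) in Hsmall.
  assert (HKK : K * K <= 1 / gamma n).
  { unfold Rdiv; rewrite Rmult_1_l, <- (Rinv_inv (K * K)).
    apply Rinv_le_contravar; [exact Hg | exact Hsmall]. }
  assert (Hg1 : gamma n <= 1).
  { apply Rle_trans with (/ (K * K)); [exact Hsmall |].
    rewrite <- Rinv_1; apply Rinv_le_contravar; unfold K; nra. }
  set (L := ln (1 / gamma n)).
  assert (HL : 0 < L).
  { unfold L; rewrite <- ln_1; apply ln_increasing; [lra | unfold K in HKK; nra]. }
  assert (HW : L / 4 <= W0 (1 / (2 * rho0 * gamma n) + 1 / rho0)).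
  { apply (quarter_ln_le_W0 K); [unfold K; lra | exact HKK |].
    assert (0 < 1 / rho0) by (apply Rdiv_lt_0_compat; lra).
    replace (1 / gamma n / K) with (1 / (2 * rho0 * gamma n)) by (unfold K; field; lra).
    lra. }
  unfold sigmaT; fold L.
  rewrite !Rabs_right.
  - apply Rle_trans with ((a n + gamma n) * / (L / 4)).
    + apply Rmult_le_compat_l; [lra |].
      apply Rinv_le_contravar; [lra | exact HW].
    + replace (/ (L / 4)) with (4 * / L) by (field; lra).
      assert (0 < / L) by (apply Rinv_0_lt_compat; lra).
      nra.
  - apply Rle_ge, Rlt_le, Rmult_lt_0_compat; [lra | apply Rinv_0_lt_compat; lra].
  - apply Rle_ge, Rlt_le, Rdiv_lt_0_compat; lra.
Qed.

Lemma sigmaT_le_const a gamma n :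
  0 < gamma n -> 0 <= a n ->
  Rabs (sigmaT a gamma n) <= / Rmin 1 (1 / rho0 / exp 1) * Rabs (a n + gamma n).
Proof.
  intros Hg Ha; pose proof rho0_gt1.
  assert (Hc : 0 < 1 / rho0) by (apply Rdiv_lt_0_compat; lra).
  assert (Hmin : 0 < Rmin 1 (1 / rho0 / exp 1)).
  { apply Rmin_glb_lt; [lra | apply Rdiv_lt_0_compat; [lra | apply exp_pos]]. }
  assert (Harg : 0 < 1 / (2 * rho0 * gamma n)) by (apply Rdiv_lt_0_compat; nra).
  pose proof (W0_ge_min (1 / rho0) (1 / (2 * rho0 * gamma n) + 1 / rho0) Hc
                ltac:(lra)) as HW.
  unfold sigmaT; rewrite !Rabs_right by (apply Rle_ge, Rlt_le;
    try apply Rdiv_lt_0_compat; lra).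
  unfold Rdiv at 1; rewrite Rmult_comm.
  apply Rmult_le_compat_r; [lra |].
  apply Rinv_le_contravar; [exact Hmin | exact HW].
Qed.

Theorem lemmaI2 (gamma a : nat -> R)
  (Hg : forall n, 0 < gamma n) (Ha : forall n, 1 / 2 <= a n) :
  (littleo gamma (fun _ => 1) ->
     bigO (sigmaT a gamma) (fun n => a n * / ln (1 / gamma n))) /\
  (bigOmega gamma (fun _ => 1) ->
     bigO (sigmaT a gamma) (fun n => a n + gamma n)).
Proof.
  pose proof rho0_gt1.
  split.
  - intros Hsmall.
    destruct (Hsmall (/ (2 * rho0 * (2 * rho0)))) as [N HN].
    { apply Rinv_0_lt_compat; nra. }
    exists 12, N; intros n Hn.
    specialize (HN n Hn); rewrite Rabs_R1, Rmult_1_r, Rabs_right in HN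
      by (apply Rle_ge, Rlt_le, Hg).
    apply sigmaT_le_ln; [apply Hg | exact HN | apply Ha].
  - intros _.
    exists (/ Rmin 1 (1 / rho0 / exp 1)), 0%nat; intros n _.
    apply sigmaT_le_const; [apply Hg | pose proof (Ha n); lra].
Qed.
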